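(* Let $v\ge2$. An optimum $(d,2)$-CDA$((d+1)v^2;5,v)$ exists for every positive integer $d$ with $d+1\le v$, except possibly in the following cases: (1) $(d,v)\in\{(2,6),(4,6)\}$; (2) $v=6u$ and $d=v-2$, where $u\ne1$ and $\gcd(u,6)=1$.
   Context: Consecutive $t$-way interaction in an $N\times k$ array $A=(a_{ij})$ over a $v$-set $V$: $T=\{(i,x_i),\dots,(i+t-1,x_{i+t-1})\}$, $1\le i\le k-t+1$, $x_r\in V$; $\rho(A,T)=\{r: a_{r,j}=x_j\ \forall (j,x_j)\in T\}$, $\rho(A,\mathcal T)=\bigcup_{T\in\mathcal T}\rho(A,T)$. A $(d,t)$-CDA$(N;k,v)$ is an $N\times k$ array over $V$ in which every $t$ consecutive columns contain every $t$-tuple at least once, and such that for every set $\mathcal T$ of exactly $d$ distinct consecutive $t$-way interactions and every consecutive $t$-way interaction $T$: $\rho(A,T)\subseteq\rho(A,\mathcal T)$ iff $T\in\mathcal T$. It is optimum if $N=(d+1)v^t$. *)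

From mathcomp Require Import all_boot.
Set Implicit Arguments. Unset Strict Implicit. Unset Printing Implicit Defensive.

(* An N x k array over the v-set V = 'I_v (symbols 0..v-1); rows 'I_N, columns 'I_k
   (0-indexed, so column i of the paper is column i-1 here). *)
Definition array (N k v : nat) := 'I_N -> 'I_k -> 'I_v.

(* A consecutive t-way interaction: a starting column i with 0 <= i <= k - t
   (i.e. i : 'I_(k - t + 1)) together with the t values x_i, ..., x_{i+t-1}. *)
Definition cinter (k t v : nat) : finType := ('I_(k - t).+1 * t.-tuple 'I_v)%type.

Definition rho (N k v t : nat) (A : array N k v) (T : cinter k t v) : {set 'I_N} :=
  [set r : 'I_N | [forall j : 'I_t,
      [forall c : 'I_k, (val c == (val T.1 + val j)%N) ==> (A r c == tnth T.2 j)]]].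

Definition rhoS (N k v t : nat) (A : array N k v) (cT : {set cinter k t v}) : {set 'I_N} :=
  \bigcup_(T in cT) rho A T.

Definition is_CDA (d t N k v : nat) (A : array N k v) : Prop :=
  (forall T : cinter k t v, rho A T != set0) /\
  (forall (cT : {set cinter k t v}) (T : cinter k t v),
      #|cT| = d -> (rho A T \subset rhoS A cT) <-> T \in cT).

Definition is_optimum_CDA (d t N k v : nat) (A : array N k v) : Prop :=
  is_CDA d t A /\ N = (d.+1 * v ^ t)%N.

From mathcomp Require Import all_boot ssralg zmodp zify.
Set Implicit Arguments. Unset Strict Implicit. Unset Printing Implicit Defensive.
Import GRing.Theory.

(* Index the (d+1)v^2 rows by triples (s, x, y) with s in {0..d} and x, y in
   Z_v, and let row (s, x, y) read x, y, x+s, y+s, x+2s.  For each s exactly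
   one row with that s meets a given consecutive 2-way interaction, so every
   interaction is met by d+1 rows.  Two different windows of a row determine
   s (their union always contains two columns differing by s) and then x and
   y, so distinct interactions share at most one row.  Hence d interactions
   other than T cover at most d of the d+1 rows of T. *)

Lemma leq_card_bigcup (I T : finType) (P : pred I) (F : I -> {set T}) :
  #|\bigcup_(i | P i) F i| <= \sum_(i | P i) #|F i|.
Proof.
elim/big_rec2: _ => [|i n U _ leUn]; first by rewrite cards0.
by rewrite (leq_trans (leq_card_setU _ _).1) ?leq_add2l.
Qed.

Lemma is_CDA_of_overlaps (d t N k v : nat) (A : array N k v) :
  (forall T : cinter k t v, d < #|rho A T|) ->
  (forall T T' : cinter k t v, T != T' -> #|rho A T :&: rho A T'| <= 1) ->
  is_CDA d t A.
Proof.
move=> rho_big overlap; split=> [T | cT T card_cT].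
  by rewrite -card_gt0 (leq_ltn_trans _ (rho_big T)).
split=> [sub_rhoT | T_cT]; last exact: bigcup_sup T_cT.
apply: contraTT (rho_big T) => T_notin_cT; rewrite -leqNgt.
have sub_cover : rho A T \subset \bigcup_(T' in cT) (rho A T :&: rho A T').
  apply/subsetP=> r rT; have /bigcupP[T' T'cT rT'] := subsetP sub_rhoT r rT.
  by apply/bigcupP; exists T'; rewrite // inE rT.
rewrite -card_cT -(sum1_card (mem cT)); apply: (leq_trans (subset_leq_card sub_cover)).
apply: (leq_trans (leq_card_bigcup _ _)); apply: leq_sum => T' T'cT.
by apply: overlap; apply: contraNneq T_notin_cT => ->.
Qed.

Definition mkarray (N k v : nat) (f : 'I_N -> nat -> 'I_v) : array N k v :=
  fun r c => f r c.

Lemma tuple2_eq (V : Type) (t t' : 2.-tuple V) :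
  tnth t ord0 = tnth t' ord0 -> tnth t ord_max = tnth t' ord_max -> t = t'.
Proof.
move=> eq0 eq1; apply: eq_from_tnth => -[[|[|i]] lt_i] //.
  by rewrite (_ : Ordinal lt_i = ord0) //; apply: val_inj.
by rewrite (_ : Ordinal lt_i = ord_max) //; apply: val_inj.
Qed.

Section Pairs.
Variables (N k v : nat) (f : 'I_N -> nat -> 'I_v).
Hypothesis k_gt1 : 1 < k.

Lemma mem_rho2 (T : cinter k 2 v) r :
  (r \in rho (mkarray f) T) =
  (f r T.1 == tnth T.2 ord0) && (f r T.1.+1 == tnth T.2 ord_max).
Proof.
have lt_col j : j < 2 -> T.1 + j < k.
  by case: T => [[i /= lt_i] _] lt_j; lia.
rewrite inE; apply/forallP/andP => [rT | [/eqP fr0 /eqP fr1] j].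
  have /forallP/(_ (Ordinal (lt_col 0 isT)))/= := rT ord0.
  have /forallP/(_ (Ordinal (lt_col 1 isT)))/= := rT ord_max.
  by rewrite /mkarray /= addn0 addn1 !eqxx.
apply/forallP=> c; apply/implyP=> /eqP c_eq; rewrite /mkarray c_eq {c c_eq}.
case: j => [[|[|j]] lt_j] //=.
  by rewrite addn0 fr0; apply/eqP; congr tnth; apply: val_inj.
by rewrite addn1 fr1; apply/eqP; congr tnth; apply: val_inj.
Qed.

Lemma rho2_overlap_le1 :
  (forall (i j : 'I_(k - 2).+1) r1 r2, i != j ->
     f r1 i = f r2 i -> f r1 i.+1 = f r2 i.+1 ->
     f r1 j = f r2 j -> f r1 j.+1 = f r2 j.+1 -> r1 = r2) ->
  forall T T' : cinter k 2 v, T != T' ->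
    #|rho (mkarray f) T :&: rho (mkarray f) T'| <= 1.
Proof.
move=> windows_inj T T' neTT'; apply/card_le1_eqP => r2 r1.
move=> /setIP[]; rewrite !mem_rho2 => /andP[/eqP a2 /eqP b2] /andP[/eqP c2 /eqP d2].
move=> /setIP[]; rewrite !mem_rho2 => /andP[/eqP a1 /eqP b1] /andP[/eqP c1 /eqP d1].
have [eq_start | ne_start] := eqVneq T.1 T'.1.
  case/eqP: neTT'; case: T T' eq_start a1 b1 c1 d1 {a2 b2 c2 d2} => [i t] [i' t'] /= <-.
  by move=> -> -> eq0 eq1; rewrite (tuple2_eq eq0 eq1).
by apply: (windows_inj _ _ _ _ ne_start); rewrite ?a1 ?a2 ?b1 ?b2 ?c1 ?c2 ?d1 ?d2.
Qed.

End Pairs.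

Section ShiftColumns.
Variables (G : zmodType) (S : Type) (shift : S -> G).
Local Open Scope ring_scope.

Definition shift_col (c : nat) (z : S * G * G) : G :=
  let: (s, x, y) := z in
  match c with
  | 0%N => x | 1%N => y | 2%N => x + shift s | 3%N => y + shift s
  | _ => x + shift s + shift s
  end.

Definition window_preimage (i : nat) (s : S) (a b : G) : S * G * G :=
  match i with
  | 0%N => (s, a, b) | 1%N => (s, b - shift s, a)
  | 2%N => (s, a - shift s, b - shift s)
  | _ => (s, b - shift s - shift s, a - shift s)
  end.

Lemma shift_col_preimage (i : nat) s a b : (i < 4)%N ->
  shift_col i (window_preimage i s a b) = a /\
  shift_col i.+1 (window_preimage i s a b) = b.
Proof. by case: i => [|[|[|[|]]]] //= _; rewrite ?subrK. Qed.

Lemma window_preimage_inj (i : nat) (a b : G) :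
  injective (fun s => window_preimage i s a b).
Proof. by move=> s1 s2 /(congr1 (fun z => z.1.1)); case: i => [|[|[|[|i]]]]. Qed.

Lemma shift_col_windows_inj (i j : nat) (z1 z2 : S * G * G) :
  injective shift -> (i < 4)%N -> (j < 4)%N -> i <> j ->
  shift_col i z1 = shift_col i z2 -> shift_col i.+1 z1 = shift_col i.+1 z2 ->
  shift_col j z1 = shift_col j z2 -> shift_col j.+1 z1 = shift_col j.+1 z2 ->
  z1 = z2.
Proof.
case: z1 z2 => [[s1 x1] y1] [[s2 x2] y2] shift_inj lt_i lt_j ne_ij eq1 eq2 eq3 eq4.
suff: (shift s1, x1, y1) = (shift s2, x2, y2) by case=> /shift_inj -> -> ->.
move: lt_i lt_j ne_ij eq1 eq2 eq3 eq4.
case: i j => [|[|[|[|i]]]] [|[|[|[|j]]]] //= _ _ ne_ij; try by case: ne_ij.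
all: move: (shift s1) (shift s2) => t1 t2 eq1 eq2 eq3 eq4.
all: repeat match goal with
  | H : ?a = ?a |- _ => clear H
  | H : ?x = ?y |- _ => is_var x; is_var y; subst x
  | H : ?a + ?b = ?a + ?c |- _ => move/addrI: H => H
  | H : ?b + ?a = ?c + ?a |- _ => move/addIr: H => H
  | H : ?a + ?b = ?c, H' : ?a + ?b + ?d = ?e |- _ => rewrite H in H'
  end.
all: by [].
Qed.

End ShiftColumns.

Section ShiftArray.
Variables (d w : nat).
Hypothesis lt_dv : d < w.+1.

Definition shift_row := ('I_d.+1 * 'I_w.+1 * 'I_w.+1)%type.

Lemma card_shift_row : #|{: shift_row}| = d.+1 * w.+1 ^ 2.
Proof. by rewrite !card_prod !card_ord mulnA. Qed.

Definition row_of (r : 'I_(d.+1 * w.+1 ^ 2)) : shift_row :=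
  enum_val (cast_ord (esym card_shift_row) r).

Definition row_index (z : shift_row) : 'I_(d.+1 * w.+1 ^ 2) :=
  cast_ord card_shift_row (enum_rank z).

Lemma row_indexK : cancel row_index row_of.
Proof. by move=> z; rewrite /row_of /row_index cast_ordK enum_rankK. Qed.

Lemma row_ofK : cancel row_of row_index.
Proof. by move=> r; rewrite /row_of /row_index enum_valK cast_ordKV. Qed.

Definition shift_array : array (d.+1 * w.+1 ^ 2) 5 w.+1 :=
  mkarray (fun r c => shift_col (widen_ord lt_dv) c (row_of r)).

Lemma shift_array_rho_gt (T : cinter 5 2 w.+1) : d < #|rho shift_array T|.
Proof.
pose a := tnth T.2 ord0; pose b := tnth T.2 ord_max.
pose row s := row_index (window_preimage (widen_ord lt_dv) T.1 s a b).
have row_inj : injective row.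
  by move=> s1 s2 /(can_inj row_indexK); apply: window_preimage_inj.
have sub_rho : [set row s | s : 'I_d.+1] \subset rho shift_array T.
  apply/subsetP=> _ /imsetP[s _ ->]; rewrite mem_rho2 // /row row_indexK.
  by have [-> ->] := shift_col_preimage (widen_ord lt_dv) s a b (ltn_ord T.1); rewrite !eqxx.
by apply: leq_trans (subset_leq_card sub_rho); rewrite card_imset // card_ord.
Qed.

Lemma shift_array_overlap (T T' : cinter 5 2 w.+1) :
  T != T' -> #|rho shift_array T :&: rho shift_array T'| <= 1.
Proof.
apply: rho2_overlap_le1 => // i j r1 r2 ne_ij eq1 eq2 eq3 eq4.
apply: (can_inj row_ofK); apply: (shift_col_windows_inj _ _ _ _ eq1 eq2 eq3 eq4).
- by move=> s1 s2 /(congr1 val) /= e; apply: val_inj.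
- exact: ltn_ord i.
- exact: ltn_ord j.
- by move=> eq_ij; case/eqP: ne_ij; apply: val_inj.
Qed.

End ShiftArray.

Theorem mainTheorem19 (v d : nat) :
  2 <= v -> 0 < d -> d.+1 <= v ->
  ~ ((d == 2) && (v == 6) || (d == 4) && (v == 6)) ->
  ~ (exists u : nat, [/\ v = 6 * u, d = v - 2, u != 1 & coprime u 6]) ->
  exists A : array (d.+1 * v ^ 2) 5 v, is_optimum_CDA d 2 A.
Proof.
case: v => [|w] // _ _ lt_dv _ _.
exists (shift_array lt_dv); split; last by [].
apply: is_CDA_of_overlaps; [exact: shift_array_rho_gt | exact: shift_array_overlap].
Qed.
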